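(* Let $\mathbf{X}$ be a set of discrete random variables with sample space $\Omega(\mathbf{X})$, and let $O$ be a positive unital circuit over $\mathbf{X}$. Then the family $\{O(\mathbf{x})\}_{\mathbf{x}\in\Omega(\mathbf{X})}$ is a positive operator-valued measure, i.e. each $O(\mathbf{x})$ is positive semi-definite and $\sum_{\mathbf{x}\in\Omega(\mathbf{X})}O(\mathbf{x})=\mathbb{1}$.
   Context: A positive operator-valued measure (POVM) is a finite family of PSD complex matrices summing to the identity matrix. A quantum operation from $d\times d$ to $d'\times d'$ complex matrices is a map $\Phi(A)=\sum_{j}K_jAK_j^*$ with $d'\times d$ matrices $K_j$ satisfying $\sum_j K_j^*K_j\le\mathbb{1}$ (Loewner order); it is unital if $\Phi(\mathbb{1}_d)=\mathbb{1}_{d'}$. A partition circuit over $\mathbf{X}=\{X_0,\dots,X_{N-1}\}$ is a rooted binary tree whose leaves are in bijection with the variables (leaf $k$ carries variable $X_k$ with finite sample space $\Omega(X_k)$); each internal unit $k$ has two children $k_l,k_r$; $\mathbf{x}_k$ denotes an assignment to the variables at the leaves below $k$. A positive operator circuit assigns to each leaf $k$ PSD matrices $E_{x_k}$, $x_k\in\Omega(X_k)$, and to each internal unit $k$ a quantum operation $\Phi_k$, and computes $O_k(\mathbf{x}_k)=E_{x_k}$ at leaves and $O_k(\mathbf{x}_k)=\Phi_k(O_{k_l}(\mathbf{x}_{k_l})\otimes O_{k_r}(\mathbf{x}_{k_r}))$ at internal units ($\otimes$ the Kronecker product); $O(\mathbf{x})=O_{\mathrm{root}}(\mathbf{x})$.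 It is a positive unital circuit if every $\Phi_k$ is unital (i.e. $\Phi_k(\mathbb{1}_{k_l}\otimes\mathbb{1}_{k_r})=\mathbb{1}_k$ with identity matrices of the appropriate sizes) and for every leaf $k$ the family $\{E_{x_k}\}_{x_k\in\Omega(X_k)}$ is a POVM. *)

(* Complex scalars: an arbitrary numClosedFieldType C
   (e.g. algC, or complex R for R : rcfType); Kronecker product from
   mathcomp-real-closed's mxtens. *)
From HB Require Import structures.
From mathcomp Require Import all_boot all_order all_algebra.
From mathcomp Require Export mxtens.
Set Implicit Arguments.
Unset Strict Implicit.
Unset Printing Implicit Defensive.
Import Order.TTheory GRing.Theory Num.Theory.
Local Open Scope ring_scope.

Section Circuits.
Variable C : numClosedFieldType.

Definition adjmx m n (A : 'M[C]_(m, n)) : 'M[C]_(n, m) := (map_mx Num.conj A)^T.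

Definition psdmx n (A : 'M[C]_n) : Prop :=
  adjmx A = A /\ forall v : 'cV[C]_n, 0 <= (adjmx v *m A *m v) 0 0.

Definition loewner_le n (A B : 'M[C]_n) : Prop := psdmx (B - A).

Definition POVM (I : finType) n (E : I -> 'M[C]_n) : Prop :=
  (forall i, psdmx (E i)) /\ \sum_(i : I) E i = 1%:M.

Definition kraus_apply d d' (Ks : seq 'M[C]_(d', d)) (A : 'M[C]_d) : 'M[C]_d' :=
  \sum_(K <- Ks) (K *m A *m adjmx K).

Definition is_quantum_operation d d' (Ks : seq 'M[C]_(d', d)) : Prop :=
  loewner_le (\sum_(K <- Ks) (adjmx K *m K)) 1%:M.

Definition is_unital d d' (Ks : seq 'M[C]_(d', d)) : Prop :=
  kraus_apply Ks 1%:M = 1%:M.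

Variable N : nat.
(* variables X_0 .. X_{N-1} with finite sample spaces Omega k *)
Variable Omega : 'I_N -> finType.

(* positive operator circuit whose root unit has dimension d: a binary
   tree; leaves carry a variable index k and matrices E_{x_k}, internal
   units carry Kraus operators of a quantum operation from
   (dl*dr) x (dl*dr) matrices to d x d matrices. *)
Inductive circuit : nat -> Type :=
| CLeaf (d : nat) (k : 'I_N) (E : Omega k -> 'M[C]_d) : circuit d
| CNode (d dl dr : nat) (Ks : seq 'M[C]_(d, dl * dr))
        (l : circuit dl) (r : circuit dr) : circuit d.

Fixpoint leaves d (c : circuit d) : seq 'I_N :=
  match c with
  | CLeaf _ k _ => [:: k]
  | CNode _ _ _ _ l r => leaves l ++ leaves r
  end.

Definition partition_circuit d (c : circuit d) : Prop :=
  perm_eq (leaves c) (enum 'I_N).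

Definition assignment := {dffun forall k : 'I_N, Omega k}.

Fixpoint eval d (c : circuit d) (x : assignment) : 'M[C]_d :=
  match c with
  | CLeaf _ k E => E (x k)
  | CNode _ _ _ Ks l r => kraus_apply Ks (eval l x *t eval r x)
  end.

Fixpoint positive_unital d (c : circuit d) : Prop :=
  match c with
  | CLeaf _ k E => POVM E
  | CNode _ _ _ Ks l r =>
      [/\ is_quantum_operation Ks, is_unital Ks,
          positive_unital l & positive_unital r]
  end.

End Circuits.

(* Positivity propagates up the tree: a Kronecker product of PSD matrices is
   PSD (factor each as R^* R through the spectral theorem), and a Kraus map is
   a sum of congruences K A K^*.  Normalisation is proved for every subtree c
   at once: summing O_c over the assignments that agree with a fixed x off the
   variables of c gives 1.  Since the leaves of the two children are disjoint,
   at a node this sum is the Kronecker product of the children's sums, i.e.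
   1 *t 1 = 1, which unitality maps to 1.  At the root the sum runs over all
   assignments, provided one exists; if some sample space is empty, the empty
   POVM at its leaf forces dimension 0 there, and unitality propagates this to
   the root. *)

From mathcomp Require Import all_boot all_order all_algebra.
From mathcomp Require Import spectral.
Import Order.TTheory GRing.Theory Num.Theory.
Local Open Scope ring_scope.
Set Implicit Arguments.
Unset Strict Implicit.
Unset Printing Implicit Defensive.

Section Kronecker.
Variable R : pzRingType.

Lemma tensmx11 m n : (1%:M : 'M[R]_m) *t (1%:M : 'M[R]_n) = 1%:M.
Proof.
apply/matrixP=> i j.
case: (mxtens_indexP i) => i1 i2; case: (mxtens_indexP j) => j1 j2.
rewrite tensmxE !mxE (inj_eq (can_inj (@mxtens_indexK m n))) xpair_eqE.
by case: (i1 == j1); case: (i2 == j2); rewrite ?mulr1n ?mulr0n ?mulr1 ?mulr0.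
Qed.

Lemma tensmx_suml m n p q (I : finType) (P : pred I) (F : I -> 'M[R]_(m, n))
    (B : 'M[R]_(p, q)) :
  (\sum_(i | P i) F i) *t B = \sum_(i | P i) (F i *t B).
Proof.
apply/matrixP=> a b; rewrite summxE !mxE summxE mulr_suml.
by apply: eq_bigr => i _; rewrite !mxE.
Qed.

Lemma tensmx_sumr m n p q (I : finType) (P : pred I) (A : 'M[R]_(m, n))
    (F : I -> 'M[R]_(p, q)) :
  A *t (\sum_(i | P i) F i) = \sum_(i | P i) (A *t F i).
Proof.
apply/matrixP=> a b; rewrite summxE !mxE summxE mulr_sumr.
by apply: eq_bigr => i _; rewrite !mxE.
Qed.

End Kronecker.

Lemma mx1_eq0 (R : nzRingType) n : (1%:M : 'M[R]_n) = 0 -> n = 0%N.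
Proof.
case: n => // n /matrixP/(_ ord0 ord0)/eqP.
by rewrite !mxE eqxx mulr1n oner_eq0.
Qed.

Section Adjoint.
Variable C : numClosedFieldType.

Lemma adjmxE m n (A : 'M[C]_(m, n)) : adjmx A = (A ^t*)%sesqui.
Proof. by rewrite /adjmx map_trmx. Qed.

Lemma adjmxK m n (A : 'M[C]_(m, n)) : adjmx (adjmx A) = A.
Proof. by apply/matrixP => i j; rewrite !mxE conjCK. Qed.

Lemma adjmxM m n p (A : 'M[C]_(m, n)) (B : 'M[C]_(n, p)) :
  adjmx (A *m B) = adjmx B *m adjmx A.
Proof. by rewrite /adjmx map_mxM trmx_mul. Qed.

Lemma adjmxD m n (A B : 'M[C]_(m, n)) : adjmx (A + B) = adjmx A + adjmx B.
Proof. by rewrite /adjmx map_mxD linearD. Qed.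

Lemma adjmx0 m n : adjmx (0 : 'M[C]_(m, n)) = 0.
Proof. by rewrite /adjmx map_mx0 trmx0. Qed.

Lemma adjmx1 n : adjmx (1%:M : 'M[C]_n) = 1%:M.
Proof. by rewrite /adjmx map_mx1 trmx1. Qed.

Lemma adjmx_tens m n p q (A : 'M[C]_(m, n)) (B : 'M[C]_(p, q)) :
  adjmx (A *t B) = adjmx A *t adjmx B.
Proof. by rewrite /adjmx map_mxT trmx_tens. Qed.

Lemma adjmx_diag n (d : 'rV[C]_n) : adjmx (diag_mx d) = diag_mx (map_mx Num.conj d).
Proof. by rewrite /adjmx map_diag_mx tr_diag_mx. Qed.

Lemma adjmx_mul_self_ge0 n (u : 'cV[C]_n) : 0 <= (adjmx u *m u) 0 0.
Proof. by rewrite mxE; apply: sumr_ge0 => i _; rewrite !mxE mulrC mul_conjC_ge0. Qed.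

End Adjoint.

Section PositiveSemiDefinite.
Variable C : numClosedFieldType.

Lemma psdmx0 n : psdmx (0 : 'M[C]_n).
Proof. by split=> [|v]; rewrite ?adjmx0 // mulmx0 mul0mx mxE. Qed.

Lemma psdmx1 n : psdmx (1%:M : 'M[C]_n).
Proof. by split=> [|v]; rewrite ?adjmx1 // mulmx1 adjmx_mul_self_ge0. Qed.

Lemma psdmxD n (A B : 'M[C]_n) : psdmx A -> psdmx B -> psdmx (A + B).
Proof.
move=> [Ah Ap] [Bh Bp]; split; first by rewrite adjmxD Ah Bh.
by move=> v; rewrite mulmxDr mulmxDl mxE addr_ge0.
Qed.

Lemma psdmx_conj m n (B : 'M[C]_(m, n)) (A : 'M[C]_n) :
  psdmx A -> psdmx (B *m A *m adjmx B).
Proof.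
move=> [Ah Ap]; split; first by rewrite !adjmxM adjmxK Ah mulmxA.
move=> v; have := Ap (adjmx B *m v).
by rewrite adjmxM adjmxK !mulmxA.
Qed.

Lemma psdmx_adjmx_mul m n (R : 'M[C]_(m, n)) : psdmx (adjmx R *m R).
Proof. by have := psdmx_conj (adjmx R) (psdmx1 m); rewrite mulmx1 adjmxK. Qed.

Lemma psdmx_diag_ge0 n (A : 'M[C]_n) i : psdmx A -> 0 <= A i i.
Proof.
move=> [_ /(_ (delta_mx i 0))].
by rewrite /adjmx map_delta_mx trmx_delta -rowE -colE !mxE.
Qed.

Lemma psdmx_factor n (A : 'M[C]_n) : psdmx A -> exists R : 'M[C]_n, A = adjmx R *m R.
Proof.
move=> psdA; have [Ah _] := psdA.
have /orthomx_spectralP : A \is normalmx by apply/normalmxP; rewrite -adjmxE Ah.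
rewrite invmx_unitary ?spectral_unitarymx // -adjmxE.
set P := spectralmx A; set s := spectral_diag A => defA.
have PPadj : P *m adjmx P = 1%:M by rewrite adjmxE; apply/unitarymxP/spectral_unitarymx.
have s_ge0 i : 0 <= s 0 i.
  have := psdmx_diag_ge0 i (psdmx_conj P psdA).
  by rewrite defA !mulmxA PPadj mul1mx -mulmxA PPadj mulmx1 mxE eqxx mulr1n.
exists (diag_mx (map_mx sqrtC s) *m P).
rewrite adjmxM adjmx_diag mulmxA -(mulmxA (adjmx P)) mulmx_diag defA; congr (_ *m _ *m _).
apply/matrixP => i j; rewrite !mxE.
by rewrite geC0_conj ?sqrtC_ge0 // -expr2 sqrtCK.
Qed.

Lemma psdmx_tens m n (A : 'M[C]_m) (B : 'M[C]_n) :
  psdmx A -> psdmx B -> psdmx (A *t B).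
Proof.
move=> /psdmx_factor[R ->] /psdmx_factor[S ->].
by rewrite -tensmx_mul -adjmx_tens; apply: psdmx_adjmx_mul.
Qed.

Lemma psdmx_kraus d d' (Ks : seq 'M[C]_(d', d)) (A : 'M[C]_d) :
  psdmx A -> psdmx (kraus_apply Ks A).
Proof.
move=> psdA; apply: (big_ind (@psdmx C d')); [exact: psdmx0 | exact: psdmxD |].
by move=> K _; apply: psdmx_conj.
Qed.

Lemma kraus_apply_sum d d' (Ks : seq 'M[C]_(d', d)) (I : finType) (P : pred I)
    (F : I -> 'M[C]_d) :
  kraus_apply Ks (\sum_(i | P i) F i) = \sum_(i | P i) kraus_apply Ks (F i).
Proof.
rewrite /kraus_apply exchange_big /=; apply: eq_bigr => K _.
by rewrite mulmx_sumr mulmx_suml.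
Qed.

Lemma kraus_apply_dim0 d d' (Ks : seq 'M[C]_(d', d)) (A : 'M[C]_d) :
  d = 0%N -> kraus_apply Ks A = 0.
Proof. by move=> d0; subst d; apply: big1 => K _; rewrite thinmx0 !mul0mx. Qed.

End PositiveSemiDefinite.

Section Circuits.
Variables (C : numClosedFieldType) (N : nat) (Omega : 'I_N -> finType).
Local Notation assignment := (assignment Omega).
Local Notation circuit := (circuit C Omega).

Definition agree_off (s : seq 'I_N) (x y : assignment) : bool :=
  [forall k, (k \notin s) ==> (x k == y k)].

Lemma agree_offP s (x y : assignment) : reflect (forall k, k \notin s -> x k = y k) (agree_off s x y).
Proof.
apply: (iffP forallP) => xy k; first by move=> ks; apply/eqP/(implyP (xy k)).
by apply/implyP => ks; apply/eqP/xy.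
Qed.

Definition merge (s : seq 'I_N) (x y : assignment) : assignment :=
  [ffun k => if k \in s then x k else y k].

Definition depends_only_on d (s : seq 'I_N) (f : assignment -> 'M[C]_d) :=
  forall y y' : assignment, (forall k, k \in s -> y k = y' k) -> f y = f y'.

Lemma sum_agree_off_cat d (sl sr : seq 'I_N) (F : assignment -> 'M[C]_d) x :
  (forall k, k \in sl -> k \notin sr) ->
  \sum_(y | agree_off (sl ++ sr) x y) F y =
  \sum_(yl | agree_off sl x yl) \sum_(yr | agree_off sr x yr) F (merge sl yl yr).
Proof.
move=> dis; rewrite pair_big_dep /=.
rewrite (reindex_onto (fun p : assignment * assignment => merge sl p.1 p.2)
                      (fun y => (merge sl y x, merge sr y x))) /=; last first.
  move=> y /agree_offP xy; apply/ffunP => k; rewrite !ffunE.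
  case: ifP => ksl; first by rewrite ksl.
  by case: ifP => // ksr; rewrite xy // mem_cat ksl ksr.
apply: eq_bigl => -[yl yr] /=; apply/idP/idP.
  move=> /andP[_ /eqP [<- <-]].
  by apply/andP; split; apply/agree_offP => k kn; rewrite ffunE (negbTE kn).
move=> /andP[/agree_offP xyl /agree_offP xyr].
have -> : merge sl (merge sl yl yr) x = yl.
  apply/ffunP => k; rewrite !ffunE.
  by case: ifP => ksl; [rewrite ksl | rewrite xyl // ksl].
have -> : merge sr (merge sl yl yr) x = yr.
  apply/ffunP => k; rewrite !ffunE; case: ifP => ksr; last by rewrite xyr // ksr.
  by case: ifP => // ksl; have := dis k ksl; rewrite ksr.
rewrite !eqxx andbT; apply/agree_offP => k; rewrite mem_cat negb_or => /andP[ksl ksr].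
by rewrite ffunE (negbTE ksl) xyr.
Qed.

Lemma sum_agree_off_tens dl dr (sl sr : seq 'I_N) (g : assignment -> 'M[C]_dl)
    (h : assignment -> 'M[C]_dr) x :
  depends_only_on sl g -> depends_only_on sr h -> (forall k, k \in sl -> k \notin sr) ->
  \sum_(y | agree_off (sl ++ sr) x y) (g y *t h y) =
  (\sum_(y | agree_off sl x y) g y) *t (\sum_(y | agree_off sr x y) h y).
Proof.
move=> gsl hsr dis; rewrite sum_agree_off_cat // tensmx_suml.
apply: eq_bigr => yl _; rewrite tensmx_sumr; apply: eq_bigr => yr _.
congr (_ *t _); first by apply: gsl => k ksl; rewrite ffunE ksl.
by apply: hsr => k ksr; rewrite ffunE (negbTE (contraL (dis k) _)) ?ksr.
Qed.

Definition update (x : assignment) k (a : Omega k) : assignment :=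
  [ffun j => if k =P j is ReflectT e then eq_rect k Omega a j e else x j].

Lemma update_same x k (a : Omega k) : update x a k = a.
Proof. by rewrite ffunE; case: eqP => // e; rewrite eq_axiomK. Qed.

Lemma update_other x k (a : Omega k) j : k != j -> update x a j = x j.
Proof. by rewrite ffunE; case: eqP. Qed.

Lemma sum_agree_off1 d k (F : Omega k -> 'M[C]_d) x :
  \sum_(y | agree_off [:: k] x y) F (y k) = \sum_(a : Omega k) F a.
Proof.
rewrite (reindex_onto (@update x k) (fun y => y k)) /=; last first.
  move=> y /agree_offP xy; apply/ffunP => j; case: (eqVneq k j) => [<-|kj].
    by rewrite update_same.
  by rewrite update_other // xy // inE eq_sym.
apply: eq_big => [a|a _]; last by rewrite update_same.
rewrite update_same eqxx andbT; apply/agree_offP => j; rewrite inE eq_sym => kj.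
by rewrite update_other.
Qed.

Lemma eval_depends_only_on_leaves d (c : circuit d) : depends_only_on (leaves c) (eval c).
Proof.
elim: c => [d' k E | d' dl dr Ks l IHl r IHr] y y' yy' /=; first by rewrite yy' ?mem_head.
by rewrite (IHl y y') ?(IHr y y') // => k kc; apply: yy'; rewrite mem_cat kc ?orbT.
Qed.

Lemma eval_psdmx d (c : circuit d) x : positive_unital c -> psdmx (eval c x).
Proof.
elim: c => [d' k E [psdE _] | d' dl dr Ks l IHl r IHr [_ _ pl pr]] /=.
  exact: psdE.
exact/psdmx_kraus/psdmx_tens/(IHr pr)/(IHl pl).
Qed.

Lemma sum_agree_off_leaves_eval d (c : circuit d) x :
  uniq (leaves c) -> positive_unital c ->
  \sum_(y | agree_off (leaves c) x y) eval c y = 1%:M.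
Proof.
elim: c => [d' k E _ [_ sumE] | d' dl dr Ks l IHl r IHr] /=.
  by rewrite sum_agree_off1 sumE.
rewrite cat_uniq => /and3P[ul lr ur] [_ unitalKs pl pr].
have disj k : k \in leaves l -> k \notin leaves r.
  by move=> kl; apply: contraNN lr => kr; apply/hasP; exists k.
rewrite -kraus_apply_sum (sum_agree_off_tens x (eval_depends_only_on_leaves (c := l))
  (eval_depends_only_on_leaves (c := r)) disj).
by rewrite IHl // IHr // tensmx11 unitalKs.
Qed.

Lemma positive_unital_dim0 d (c : circuit d) k :
  k \in leaves c -> (Omega k -> False) -> positive_unital c -> d = 0%N.
Proof.
move=> + Omega_k0; elim: c => [d' k' E | d' dl dr Ks l IHl r IHr] /=.
  rewrite inE => /eqP kk'; subst k' => -[_ sumE].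
  by apply: (mx1_eq0 (R := C)); rewrite -sumE big1 // => a; case: (Omega_k0 a).
rewrite mem_cat => kc [_ unitalKs pl pr]; apply: (mx1_eq0 (R := C)); rewrite -unitalKs.
by apply: kraus_apply_dim0; case/orP: kc => [/IHl-> | /IHr->]; rewrite ?muln0.
Qed.

Lemma assignment_or_empty_factor :
  inhabited assignment \/ exists k, Omega k -> False.
Proof.
case: (boolP [forall k, [exists a : Omega k, true]]) => [/forallP inh|].
  by left; constructor; exact: [ffun k => xchoose (existsP (inh k))].
rewrite negb_forall => /existsP[k /existsPn Omega_k0].
by right; exists k => a; have := Omega_k0 a.
Qed.

End Circuits.

Theorem proposition4 (C : numClosedFieldType) (N : nat) (Omega : 'I_N -> finType)
  (d : nat) (O : circuit C Omega d) :
  partition_circuit O -> positive_unital O ->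
  POVM (fun x : assignment Omega => eval O x).
Proof.
move=> partO puO; split=> [x|]; first exact: eval_psdmx.
have uniqO : uniq (leaves O) by rewrite (perm_uniq partO) enum_uniq.
have leavesO k : k \in leaves O by rewrite (perm_mem partO) mem_enum.
have [[x] | [k Omega_k0]] := assignment_or_empty_factor Omega.
  rewrite -(sum_agree_off_leaves_eval x uniqO puO); apply: eq_bigl => y.
  by apply/esym/agree_offP => k; rewrite leavesO.
have d0 := positive_unital_dim0 (leavesO k) Omega_k0 puO.
by subst d; apply/matrixP => -[].
Qed.
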